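(* Let the sequences of integers $(a_k)_{k\ge 0}$, $(b_k)$, $(c_k)$, $(d_k)$, $(e_k)$, $(f_k)$, $(p_k)$, $(q_k)$, $(r_k)$, $(s_k)$, $(t_k)$ be defined as the coefficients of the following power series expansions about $x=0$: \begin{align*} &\frac{x^2+164 x+3}{x^3-99 x^2+99 x-1}=\sum_{k=0}^{\infty}a_k x^k, && \frac{-5 x^2+138 x+3}{x^3-99 x^2+99 x-1}=\sum_{k=0}^{\infty}p_k x^k,\\ &\frac{-7 x^2+134 x+1}{x^3-99 x^2+99 x-1}=\sum_{k=0}^{\infty}b_k x^k, && \frac{3 x^2+244 x+1}{x^3-99 x^2+99 x-1}=\sum_{k=0}^{\infty}q_k x^k,\\ &\frac{-x^2+298 x-1}{x^3-99 x^2+99 x-1}=\sum_{k=0}^{\infty}c_k x^k, && \frac{x^2+254 x-7}{x^3-99 x^2+99 x-1}=\sum_{k=0}^{\infty}r_k x^k,\\ &\frac{-5 x^2+228 x-7}{x^3-99 x^2+99 x-1}=\sum_{k=0}^{\infty}d_k x^k, && \frac{-7 x^2+148 x-5}{x^3-99 x^2+99 x-1}=\sum_{k=0}^{\infty}s_k x^k,\\ &\frac{3 x^2+258 x-5}{x^3-99 x^2+99 x-1}=\sum_{k=0}^{\infty}e_k x^k, && \frac{3}{1-x}=\sum_{k=0}^{\infty}t_k x^k,\\ &\frac{-3 x^2+94 x-3}{x^3-99 x^2+99 x-1}=\sum_{k=0}^{\infty}f_k x^k. \end{align*} Then for every integer $j$ with $1\le j\le 5$ and every integer $k\ge 0$,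 \[ a_k^j+b_k^j+c_k^j+d_k^j+e_k^j+f_k^j-p_k^j-q_k^j-r_k^j-s_k^j-t_k^j=1. \]
   Context: The sequences are the Taylor coefficients at $x=0$ of the given rational functions (all denominators are nonzero at $x=0$), equivalently formal power series identities. *)

From mathcomp Require Import all_boot all_order all_algebra.
Set Implicit Arguments. Unset Strict Implicit. Unset Printing Implicit Defensive.
Import GRing.Theory Num.Theory.
Local Open Scope ring_scope.

(* [is_coeffs_of N D u] : u is the sequence of Taylor coefficients at 0 of the
   rational function N/D (D(0) <> 0), i.e. the formal power series identity
   D(x) * (sum_k u_k x^k) = N(x), coefficientwise:
   for all k, sum_{i=0}^{k} D_i u_{k-i} = N_k. *)
Definition is_coeffs_of (N D : {poly int}) (u : nat -> int) : Prop :=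
  forall k : nat, \sum_(i < k.+1) D`_i * u (k - i)%N = N`_k.

Definition den99 : {poly int} := 'X^3 - 99%:P * 'X^2 + 99%:P * 'X - 1.

From mathcomp Require Import all_boot all_order all_algebra ring.
Import GRing.Theory Num.Theory.
Local Open Scope ring_scope.

(* The denominator factors as -(1 - x)(1 - 98x + x^2), and the roots of
   x^2 - 98x + 1 are 49 +- 20 sqrt 6, where 49 + 20 sqrt 6 = (5 + 2 sqrt 6)^2 has
   norm 1 in Z[sqrt 6].  Writing (49 + 20 sqrt 6)^k = X_k + Y_k sqrt 6 (this is
   [pell k]), partial fractions give 12 u_k = A + B X_k + C Y_k for each of the
   ten sequences u, while t_k = 3.  Since X_k^2 - 6 Y_k^2 = 1, the claim becomes a
   polynomial identity in X, Y modulo X^2 - 6 Y^2 - 1, checked for j <= 5. *)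

Lemma is_coeffs_of_uniq {N D : {poly int}} {u v : nat -> int} : D`_0 != 0 ->
  is_coeffs_of N D u -> is_coeffs_of N D v -> u =1 v.
Proof.
move=> D0 hu hv; elim/ltn_ind=> k IH.
have := hu k; rewrite -(hv k) !big_ord_recl !subn0.
rewrite [X in _ = _ + X](eq_bigr (fun i : 'I_k =>
  D`_(lift ord0 i) * u (k - lift ord0 i)%N)).
  by move/addIr/(mulfI D0).
by move=> i _; rewrite IH // ltn_subrL (leq_ltn_trans _ (ltn_ord i)).
Qed.

Lemma is_coeffs_ofD {N M D : {poly int}} {u v : nat -> int} :
  is_coeffs_of N D u -> is_coeffs_of M D v ->
  is_coeffs_of (N + M) D (fun k => u k + v k).
Proof.
move=> hu hv k; rewrite coefD -hu -hv -big_split.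
by apply: eq_bigr => i _; rewrite mulrDr.
Qed.

Lemma is_coeffs_ofCM (c : int) {N D : {poly int}} {u : nat -> int} :
  is_coeffs_of N D u ->
  is_coeffs_of (c%:P * N) D (fun k => c * u k).
Proof.
move=> hu k; rewrite coefCM -hu mulr_sumr.
by apply: eq_bigr => i _; rewrite mulrCA.
Qed.

Lemma is_coeffs_of_rec (n : nat) (N D : {poly int}) (u : nat -> int) :
  (size D <= n.+1)%N -> (size N <= n)%N ->
  (forall k, (k < n)%N -> \sum_(i < k.+1) D`_i * u (k - i)%N = N`_k) ->
  (forall k, (n <= k)%N -> \sum_(i < n.+1) D`_i * u (k - i)%N = 0) ->
  is_coeffs_of N D u.
Proof.
move=> sD sN init rec k; have [/init //|le_nk] := ltnP k n.
rewrite [RHS]nth_default ?(leq_trans sN) // -[RHS](rec k le_nk).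
rewrite (@big_ord_widen _ _ _ n.+1 k.+1 (fun i => D`_i * u (k - i)%N) le_nk).
rewrite [RHS]big_mkcond; apply: eq_bigr => i _.
by case: ltnP => // /(leq_trans sD) ?; rewrite nth_default ?mul0r.
Qed.

Lemma is_coeffs_of_geometric {c : int} {u : nat -> int} :
  is_coeffs_of c%:P (1 - 'X) u -> forall k, u k = c.
Proof.
move=> hu k; apply: (is_coeffs_of_uniq (v := fun=> c) _ hu); first by rewrite !coefE.
apply: (is_coeffs_of_rec 1).
- by apply/leq_sizeP => -[|[|i]] // _; rewrite !coefE.
- exact: size_polyC_leq1.
- by case=> // _; rewrite big_ord1 !coefE /= mul1r.
- by move=> m _; rewrite !big_ord_recl big_ord0 !coefE /=; ring.
Qed.

Definition pell_step (v : int * int) : int * int :=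
  (49 * v.1 + 120 * v.2, 20 * v.1 + 49 * v.2).

Definition pell (k : nat) : int * int := iter k pell_step (1, 0).

Lemma pell_conic k : (pell k).1 ^+ 2 - 6 * (pell k).2 ^+ 2 = 1.
Proof.
elim: k => [//|k]; rewrite /pell iterS -/(pell k).
by case: (pell k) => x y /= IH; rewrite -[RHS]IH; ring.
Qed.

Lemma pellSS k :
  pell k.+2 = (98 * (pell k.+1).1 - (pell k).1, 98 * (pell k.+1).2 - (pell k).2).
Proof.
rewrite /pell !iterS -/(pell k); case: (pell k) => x y.
by rewrite /pell_step /=; congr (_, _); ring.
Qed.

Lemma is_coeffs_of_den99 (c0 c1 c2 : int) (u : nat -> int) :
  c0 = - u 0%N -> c1 = 99 * u 0%N - u 1%N -> c2 = - 99 * u 0%N + 99 * u 1%N - u 2%N ->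
  (forall k, u k.+3 = 99 * u k.+2 - 99 * u k.+1 + u k) ->
  is_coeffs_of (c2%:P * 'X^2 + c1%:P * 'X + c0%:P) den99 u.
Proof.
move=> e0 e1 e2 rec; apply: (is_coeffs_of_rec 3).
- by apply/leq_sizeP => -[|[|[|[|i]]]] // _; rewrite /den99 !coefE.
- by apply/leq_sizeP => -[|[|[|i]]] // _; rewrite !coefE /= !mulr0 addr0.
- case=> [|[|[|//]]] _; rewrite !big_ord_recl big_ord0 /den99 !coefE /=;
    by rewrite ?e0 ?e1 ?e2; ring.
- case=> [|[|[|k]]] // _; rewrite !big_ord_recl big_ord0 /den99 !coefE /=.
  by rewrite !subSS !subn0 rec; ring.
Qed.

(* den99 times the generating functions 1/(1 - x), (1 - 49x)/(1 - 98x + x^2) and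
   20x/(1 - 98x + x^2) of 1, X_k and Y_k. *)
Lemma is_coeffs_of_den99_const :
  is_coeffs_of ((-1)%:P * 'X^2 + 98%:P * 'X + (-1)%:P) den99 (fun=> 1).
Proof. exact: is_coeffs_of_den99. Qed.

Lemma is_coeffs_of_den99_pell1 :
  is_coeffs_of ((-49)%:P * 'X^2 + 50%:P * 'X + (-1)%:P) den99 (fun k => (pell k).1).
Proof. by apply: is_coeffs_of_den99 => // k; rewrite !pellSS /=; ring. Qed.

Lemma is_coeffs_of_den99_pell2 :
  is_coeffs_of (20%:P * 'X^2 + (-20)%:P * 'X + 0%:P) den99 (fun k => (pell k).2).
Proof. by apply: is_coeffs_of_den99 => // k; rewrite !pellSS /=; ring. Qed.

Lemma is_coeffs_of_den99_pell {A B C : int} {N : {poly int}} {u : nat -> int} :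
  is_coeffs_of N den99 u ->
  12%:P * N = A%:P * ((-1)%:P * 'X^2 + 98%:P * 'X + (-1)%:P)
            + B%:P * ((-49)%:P * 'X^2 + 50%:P * 'X + (-1)%:P)
            + C%:P * (20%:P * 'X^2 + (-20)%:P * 'X + 0%:P) ->
  forall k, 12 * u k = A + B * (pell k).1 + C * (pell k).2.
Proof.
move=> hu hN k.
have := is_coeffs_ofD
  (is_coeffs_ofD (is_coeffs_ofCM A is_coeffs_of_den99_const)
                 (is_coeffs_ofCM B is_coeffs_of_den99_pell1))
  (is_coeffs_ofCM C is_coeffs_of_den99_pell2).
rewrite -hN => /(is_coeffs_of_uniq _ (is_coeffs_ofCM 12 hu)) ->; first by rewrite mulr1.
by rewrite /den99 !coefE.
Qed.

Lemma pell_conic_power_sums {R : numDomainType} {x y a b c d e f p q r s t : R}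
    {j : nat} :
  x ^+ 2 - 6 * y ^+ 2 = 1 -> (1 <= j <= 5)%N -> t = 3 ->
  12 * a = 21 + -57 * x + -138 * y -> 12 * b = 16 + -28 * x + -72 * y ->
  12 * c = 37 + -25 * x + -60 * y -> 12 * d = 27 + 57 * x + 138 * y ->
  12 * e = 32 + 28 * x + 72 * y -> 12 * f = 11 + 25 * x + 60 * y ->
  12 * p = 17 + -53 * x + -132 * y -> 12 * q = 31 + -43 * x + -102 * y ->
  12 * r = 31 + 53 * x + 132 * y -> 12 * s = 17 + 43 * x + 102 * y ->
  a ^+ j + b ^+ j + c ^+ j + d ^+ j + e ^+ j + f ^+ j
    - p ^+ j - q ^+ j - r ^+ j - s ^+ j - t ^+ j = 1.
Proof.
move=> conic j_le5 -> ha hb hc hd he hf hp hq hr hs.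
have x2 : x ^+ 2 = 1 + 6 * y ^+ 2 by apply/eqP; rewrite -subr_eq conic.
apply: (mulfI (expf_neq0 j (_ : 12 != 0 :> R))); first by rewrite pnatr_eq0.
rewrite !(mulrDr, mulrN) -!exprMn ha hb hc hd he hf hp hq hr hs mulr1.
by case: j j_le5 => [|[|[|[|[|[|j]]]]]] // _; ring: x2.
Qed.

Theorem theorem2p1 (a b c d e f p q r s t : nat -> int) :
  is_coeffs_of ('X^2 + 164%:P * 'X + 3%:P) den99 a ->
  is_coeffs_of (- 7%:P * 'X^2 + 134%:P * 'X + 1) den99 b ->
  is_coeffs_of (- 'X^2 + 298%:P * 'X - 1) den99 c ->
  is_coeffs_of (- 5%:P * 'X^2 + 228%:P * 'X - 7%:P) den99 d ->
  is_coeffs_of (3%:P * 'X^2 + 258%:P * 'X - 5%:P) den99 e ->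
  is_coeffs_of (- 3%:P * 'X^2 + 94%:P * 'X - 3%:P) den99 f ->
  is_coeffs_of (- 5%:P * 'X^2 + 138%:P * 'X + 3%:P) den99 p ->
  is_coeffs_of (3%:P * 'X^2 + 244%:P * 'X + 1) den99 q ->
  is_coeffs_of ('X^2 + 254%:P * 'X - 7%:P) den99 r ->
  is_coeffs_of (- 7%:P * 'X^2 + 148%:P * 'X - 5%:P) den99 s ->
  is_coeffs_of (3%:P) (1 - 'X) t ->
  forall (j k : nat), (1 <= j <= 5)%N ->
    a k ^+ j + b k ^+ j + c k ^+ j + d k ^+ j + e k ^+ j + f k ^+ j
    - p k ^+ j - q k ^+ j - r k ^+ j - s k ^+ j - t k ^+ j = 1.
Proof.
move=> Ha Hb Hc Hd He Hf Hp Hq Hr Hs Ht j k hj.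
apply: (pell_conic_power_sums (pell_conic k) hj (is_coeffs_of_geometric Ht k)).
- by apply: (is_coeffs_of_den99_pell Ha); ring.
- by apply: (is_coeffs_of_den99_pell Hb); ring.
- by apply: (is_coeffs_of_den99_pell Hc); ring.
- by apply: (is_coeffs_of_den99_pell Hd); ring.
- by apply: (is_coeffs_of_den99_pell He); ring.
- by apply: (is_coeffs_of_den99_pell Hf); ring.
- by apply: (is_coeffs_of_den99_pell Hp); ring.
- by apply: (is_coeffs_of_den99_pell Hq); ring.
- by apply: (is_coeffs_of_den99_pell Hr); ring.
- by apply: (is_coeffs_of_den99_pell Hs); ring.
Qed.
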